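(* Let $K$ be a field and let $L\in K^{n\times n}[s]$, $L_1\in K^{n_1\times n_1}[s]$ be nonsingular polynomial matrices. For $\Theta\in K^{n_1\times n}_\infty(s)$ the inclusion $$\Theta\,\operatorname{Ker}\rho^L\subseteq\operatorname{Ker}\rho^{L_1}$$ holds if and only if there exist a matrix $\Theta_1\in K^{n_1\times n}_\infty(s)$ and a matrix $\Psi$ with $\Psi\in s^{-1}K^{n_1\times n}_\infty(s)$ and $L_1\Psi\in K^{n_1\times n}_\infty(s)$ such that $$(\Theta+L_1\Psi)L=L_1\Theta_1.$$
   Context: $K(s)$ denotes the field of rational functions over $K$. A rational function $f$ is proper if $f=0$ or $f=p/q$ with $p,q\in K[s]$, $q\ne0$, $\deg p\le\deg q$; $K_\infty(s)$ is the ring of proper rational functions, and $K^n_\infty(s)$, $K^{m\times r}_\infty(s)$ denote vectors/matrices with proper rational entries. One has $K(s)=K[s]\oplus s^{-1}K_\infty(s)$; $\pi_+:K(s)\to K[s]$ denotes the projection onto the polynomial part along $s^{-1}K_\infty(s)$, extended entrywise to vectors and matrices. For a nonsingular $L\in K^{n\times n}[s]$, define $\rho^L:K^n_\infty(s)\to K^n[s]$ by $\rho^L x=L\,\pi_+(L^{-1}x)$. (One has $\operatorname{Ker}\rho^L=K^n_\infty(s)\cap s^{-1}LK^n_\infty(s)$.) *)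

From HB Require Import structures.
From mathcomp Require Import all_boot all_order all_algebra.
From Stdlib Require Import ClassicalEpsilon.
Set Implicit Arguments. Unset Strict Implicit. Unset Printing Implicit Defensive.
Import GRing.Theory.
Local Open Scope ring_scope.

Section RatFun.
Variable K : fieldType.

Definition ratf := {fraction {poly K}}.
Definition polyF (p : {poly K}) : ratf := tofrac p.

Definition proper (f : ratf) : Prop :=
  f = 0 \/ exists p q : {poly K},
    q != 0 /\ (size p <= size q)%N /\ f = polyF p / polyF q.

Definition sproper (f : ratf) : Prop :=
  exists g : ratf, proper g /\ f = (polyF 'X)^-1 * g.

(* pi_+ : projection onto K[s] along s^{-1}K_oo(s) in K(s) = K[s] (+) s^{-1}K_oo(s) *)
Definition pi_plus (f : ratf) : {poly K} :=
  epsilon (inhabits 0) (fun p : {poly K} => sproper (f - polyF p)).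

Definition proper_mx m n (A : 'M[ratf]_(m, n)) : Prop := forall i j, proper (A i j).
Definition sproper_mx m n (A : 'M[ratf]_(m, n)) : Prop := forall i j, sproper (A i j).

Definition polymx m n (A : 'M[{poly K}]_(m, n)) : 'M[ratf]_(m, n) := map_mx polyF A.

Definition rho n (L : 'M[{poly K}]_n) (x : 'cV[ratf]_n) : 'cV[{poly K}]_n :=
  L *m map_mx pi_plus (invmx (polymx L) *m x).

Definition in_ker_rho n (L : 'M[{poly K}]_n) (x : 'cV[ratf]_n) : Prop :=
  proper_mx x /\ rho L x = 0.

End RatFun.

(* Ker rho^L is the set of proper x with L^-1 x strictly proper.  Given the
   factorization, L1^-1 Theta x = Theta1 (L^-1 x) - Psi x then lies in
   s^-1 K_oo(s).  Conversely, write L = V diag(d) W with V, W biproper (a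
   Smith form over the valuation ring K_oo(s), obtained by elimination with
   pivots of fewest poles at infinity) and test the inclusion on the vectors
   c V e_i: column i of P = L1^-1 Theta V times d_i is proper if d_i is proper,
   and is strictly proper otherwise.  With G the 0/1 diagonal mask of the
   improper d_i, Psi = - P G V^-1 and Theta1 = P (1 - G) diag(d) W work. *)

From HB Require Import structures.
From mathcomp Require Import all_boot all_order all_algebra all_fingroup.
From Stdlib Require Import ClassicalEpsilon.
Set Implicit Arguments. Unset Strict Implicit. Unset Printing Implicit Defensive.
Import GRing.Theory.
Local Open Scope ring_scope.

Section ProperRatFun.
Variable K : fieldType.
Local Notation F := (ratf K).
Local Notation pF := (@polyF K).
Local Notation s := (pF 'X).
Implicit Types (f g : F) (p q : {poly K}).

Lemma polyF_eq0 p : (pF p == 0) = (p == 0). Proof. exact: tofrac_eq0. Qed.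
Lemma polyF0 : pF 0 = 0. Proof. exact: tofrac0. Qed.
Lemma polyF1 : pF 1 = 1. Proof. exact: tofrac1. Qed.
Lemma polyFN : {morph pF : p / - p}. Proof. exact: tofracN. Qed.
Lemma polyFD : {morph pF : p q / p + q}. Proof. exact: tofracD. Qed.
Lemma polyFM : {morph pF : p q / p * q}. Proof. exact: tofracM. Qed.

Lemma s_neq0 : s != 0. Proof. by rewrite polyF_eq0 polyX_eq0. Qed.

Lemma ratf_frac f : exists p q, q != 0 /\ f = pF p / pF q.
Proof.
elim/quotP: f => r _; have r2_neq0 := denom_ratioP r.
exists r.1, r.2; split => //; rewrite /polyF; unlock tofrac.
rewrite -[_ / _]/(FracField.mul _ (FracField.inv _)).
rewrite -FracField.pi_inv -FracField.pi_mul /FracField.mulf /FracField.invf /=.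
by rewrite !numden_Ratio ?oner_neq0 // mulr1 mul1r Ratio_numden.
Qed.

Lemma properP f :
  proper f <-> exists p q, [/\ q != 0, (size p <= size q)%N & f = pF p / pF q].
Proof.
split=> [[->|[p [q [q0 [pq ->]]]]]|[p [q [q0 pq ->]]]]; last by right; exists p, q.
  by exists 0, 1; rewrite oner_neq0 size_poly0 polyF0 mul0r.
by exists p, q.
Qed.

Lemma proper_frac p q : q != 0 -> (size p <= size q)%N -> proper (pF p / pF q).
Proof. by move=> q0 pq; apply/properP; exists p, q. Qed.

Lemma proper0 : proper (0 : F). Proof. by left. Qed.

Lemma proper1 : proper (1 : F).
Proof. by rewrite -(divr1 1) -polyF1; apply: proper_frac; rewrite ?oner_neq0. Qed.

Lemma proper_invs : proper s^-1.
Proof.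
rewrite -[_^-1]mul1r -polyF1; apply: proper_frac; first by rewrite polyX_eq0.
by rewrite size_poly1 size_polyX.
Qed.

Lemma properN f : proper f -> proper (- f).
Proof.
move=> /properP[p [q [q0 pq ->]]]; rewrite -mulNr -polyFN.
by apply: proper_frac; rewrite ?size_polyN.
Qed.

Lemma properM f g : proper f -> proper g -> proper (f * g).
Proof.
move=> /properP[p [q [q0 pq ->]]] /properP[p' [q' [q0' pq' ->]]].
rewrite mulf_div -!polyFM; apply: proper_frac; first by rewrite mulf_neq0.
have [->|p0] := eqVneq p 0; first by rewrite mul0r size_poly0.
have [->|p0'] := eqVneq p' 0; first by rewrite mulr0 size_poly0.
by rewrite !size_mul // -!subn1 leq_sub2r // leq_add.
Qed.

Lemma properD f g : proper f -> proper g -> proper (f + g).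
Proof.
move=> /properP[p [q [q0 pq ->]]] /properP[p' [q' [q0' pq' ->]]].
rewrite addf_div ?polyF_eq0 // -!polyFM -polyFD.
apply: proper_frac; first by rewrite mulf_neq0.
have size_mul_le (a b c : {poly K}) : b != 0 -> (size a <= size c)%N ->
    (size (a * b)%R <= size (c * b)%R)%N.
  move=> b0 ac; have [->|a0] := eqVneq a 0; first by rewrite mul0r size_poly0.
  have c0 : c != 0 by rewrite -size_poly_gt0 (leq_trans _ ac) ?size_poly_gt0.
  by rewrite !size_mul // -!subn1 leq_sub2r // leq_add2r.
apply: leq_trans (size_polyD _ _) _; rewrite geq_max size_mul_le //.
by rewrite [q * _]mulrC size_mul_le.
Qed.

Lemma sproperE f : sproper f <-> proper (s * f).
Proof.
split=> [[g [pg ->]]|sf]; first by rewrite mulVKf ?s_neq0.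
by exists (s * f); rewrite mulKf ?s_neq0.
Qed.

Lemma sproper_proper f : sproper f -> proper f.
Proof. by case=> g [pg ->]; apply: properM => //; apply: proper_invs. Qed.

Lemma sproper0 : sproper (0 : F).
Proof. by apply/sproperE; rewrite mulr0; apply: proper0. Qed.

Lemma sproper_invs : sproper s^-1.
Proof. by apply/sproperE; rewrite mulfV ?s_neq0 //; apply: proper1. Qed.

Lemma sproperN f : sproper f -> sproper (- f).
Proof. by move=> /sproperE sf; apply/sproperE; rewrite mulrN; apply: properN. Qed.

Lemma sproperD f g : sproper f -> sproper g -> sproper (f + g).
Proof.
by move=> /sproperE sf /sproperE sg; apply/sproperE; rewrite mulrDr; apply: properD.
Qed.

Lemma sproperMl f g : proper f -> sproper g -> sproper (f * g).
Proof. by move=> pf /sproperE sg; apply/sproperE; rewrite mulrCA; apply: properM. Qed.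

Lemma sproperMr f g : sproper f -> proper g -> sproper (f * g).
Proof. by move=> sf pg; rewrite mulrC; apply: sproperMl. Qed.

Lemma sproper_frac p q : q != 0 -> (size p < size q)%N -> sproper (pF p / pF q).
Proof.
move=> q0 pq; apply/sproperE; rewrite mulrA -polyFM; apply: proper_frac => //.
have [->|p0] := eqVneq p 0; first by rewrite mulr0 size_poly0.
by rewrite mulrC size_mulX.
Qed.

Lemma not_proper_inv f : ~ proper f -> sproper f^-1.
Proof.
have [p [q [q0 ->]]] := ratf_frac f => npf.
have [pq|qp] := leqP (size p) (size q); first by case: npf; apply: proper_frac.
have p0 : p != 0 by rewrite -size_poly_gt0 (leq_ltn_trans _ qp).
by rewrite invf_div; apply: sproper_frac.
Qed.

(* [s p b = a] with [size a <= size b] forces [p = 0]. *)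
Lemma sproper_polyF p : sproper (pF p) -> p = 0.
Proof.
move=> /sproperE/properP[a [b [b0 ab eab]]].
have /eqP : pF ('X * p * b) = pF a by rewrite !polyFM eab divfK ?polyF_eq0.
rewrite tofrac_eq => /eqP {}eab.
apply/eqP; apply: contraTT ab => p0; rewrite -ltnNge -eab.
rewrite -mulrA mulrC size_mulX ?mulf_neq0 // size_mul //.
move: (size_poly_gt0 p); rewrite p0.
by case: (size p) => // k _; rewrite addSn ltnS leq_addl.
Qed.

Lemma pi_plusP f : sproper (f - pF (pi_plus f)).
Proof.
apply: (epsilon_spec (inhabits 0) (fun p => sproper (f - pF p))).
have [p [q [q0 ->]]] := ratf_frac f; exists (p %/ q).
have -> : pF p / pF q - pF (p %/ q) = pF (p %% q) / pF q.
  by rewrite {1}(divp_eq p q) polyFD polyFM mulrDl mulfK ?polyF_eq0 // addrAC subrr add0r.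
by apply: sproper_frac; rewrite ?ltn_modp.
Qed.

Lemma pi_plus_sproper f : sproper f -> pi_plus f = 0.
Proof.
move=> sf; apply: sproper_polyF.
rewrite -[pF _](subKr f); apply: sproperD sf (sproperN (pi_plusP f)).
Qed.

End ProperRatFun.

Section ProperMatrices.
Variable K : fieldType.
Local Notation F := (ratf K).

Lemma proper_mx0 m n : proper_mx (0 : 'M[F]_(m, n)).
Proof. by move=> i j; rewrite mxE; apply: proper0. Qed.

Lemma proper_scalar_mx n (a : F) : proper a -> proper_mx (a%:M : 'M_n).
Proof. by move=> pa i j; rewrite mxE; case: eqP => _; [apply: pa | apply: proper0]. Qed.

Lemma proper_mx1 n : proper_mx (1%:M : 'M[F]_n).
Proof. exact/proper_scalar_mx/proper1. Qed.

Lemma proper_mxN m n (A : 'M[F]_(m, n)) : proper_mx A -> proper_mx (- A).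
Proof. by move=> pA i j; rewrite mxE; apply: properN. Qed.

Lemma proper_mxM m n p (A : 'M[F]_(m, n)) (B : 'M_(n, p)) :
  proper_mx A -> proper_mx B -> proper_mx (A *m B).
Proof.
move=> pA pB i j; rewrite mxE; apply: (big_ind (@proper K)) => *.
- exact: proper0.
- exact: properD.
- exact: properM.
Qed.

Lemma proper_mxZ m n a (A : 'M[F]_(m, n)) : proper a -> proper_mx A -> proper_mx (a *: A).
Proof. by move=> pa pA i j; rewrite mxE; apply: properM. Qed.

Lemma proper_delta_mx m n i0 j0 : proper_mx (delta_mx i0 j0 : 'M[F]_(m, n)).
Proof. by move=> i j; rewrite mxE; case: (_ && _); [apply: proper1 | apply: proper0]. Qed.

Lemma proper_diag_mx n (d : 'rV[F]_n) :
  (forall i, proper (d 0 i)) -> proper_mx (diag_mx d).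
Proof. by move=> pd i j; rewrite mxE; case: eqP => _; [apply: pd | apply: proper0]. Qed.

Lemma proper_block_mx m1 m2 n1 n2 (Aul : 'M[F]_(m1, n1)) (Aur : 'M_(m1, n2))
    (Adl : 'M_(m2, n1)) (Adr : 'M_(m2, n2)) :
  proper_mx Aul -> proper_mx Aur -> proper_mx Adl -> proper_mx Adr ->
  proper_mx (block_mx Aul Aur Adl Adr).
Proof.
move=> pul pur pdl pdr i j.
by case: (split_ordP i) => i' ->; case: (split_ordP j) => j' ->;
  rewrite ?block_mxEul ?block_mxEur ?block_mxEdl ?block_mxEdr.
Qed.

Lemma sproper_mxN m n (A : 'M[F]_(m, n)) : sproper_mx A -> sproper_mx (- A).
Proof. by move=> sA i j; rewrite mxE; apply: sproperN. Qed.

Lemma sproper_mxD m n (A B : 'M[F]_(m, n)) :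
  sproper_mx A -> sproper_mx B -> sproper_mx (A + B).
Proof. by move=> sA sB i j; rewrite mxE; apply: sproperD. Qed.

Lemma sproper_mxZ m n a (A : 'M[F]_(m, n)) : sproper a -> proper_mx A -> sproper_mx (a *: A).
Proof. by move=> sa pA i j; rewrite mxE; apply: sproperMr. Qed.

Lemma sproper_mxMl m n p (A : 'M[F]_(m, n)) (B : 'M_(n, p)) :
  proper_mx A -> sproper_mx B -> sproper_mx (A *m B).
Proof.
move=> pA sB i j; rewrite mxE; apply: (big_ind (@sproper K)) => *.
- exact: sproper0.
- exact: sproperD.
- exact: sproperMl.
Qed.

Lemma sproper_mxMr m n p (A : 'M[F]_(m, n)) (B : 'M_(n, p)) :
  sproper_mx A -> proper_mx B -> sproper_mx (A *m B).
Proof.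
move=> sA pB i j; rewrite mxE; apply: (big_ind (@sproper K)) => *.
- exact: sproper0.
- exact: sproperD.
- exact: sproperMr.
Qed.

Lemma polymx_unit n (L : 'M[{poly K}]_n) : \det L != 0 -> polymx L \in unitmx.
Proof. by rewrite unitmxE unitfE /polymx det_map_mx tofrac_eq0. Qed.

Lemma in_ker_rhoP n (L : 'M[{poly K}]_n) (v : 'cV[F]_n) : \det L != 0 ->
  in_ker_rho L v <-> proper_mx v /\ sproper_mx (invmx (polymx L) *m v).
Proof.
rewrite /in_ker_rho /rho => detL0; split=> -[pv Hv]; split=> //.
  have piv0 : map_mx (@pi_plus K) (invmx (polymx L) *m v) = 0.
    move/(congr1 (mulmx (\adj L))): Hv.
    rewrite mulmxA mul_adj_mx mul_scalar_mx mulmx0 => /eqP.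
    by rewrite scalemx_eq0 (negPf detL0) => /eqP.
  move=> i j; have := pi_plusP ((invmx (polymx L) *m v) i j).
  by move/matrixP: piv0 => /(_ i j); rewrite !mxE => ->; rewrite polyF0 subr0.
have -> : map_mx (@pi_plus K) (invmx (polymx L) *m v) = 0.
  by apply/matrixP=> i j; rewrite [LHS]mxE (pi_plus_sproper (Hv i j)) mxE.
by rewrite mulmx0.
Qed.

End ProperMatrices.

Section SmithAtInfinity.
Variable K : fieldType.
Local Notation F := (ratf K).

Definition biproper n (V : 'M[F]_n) :=
  exists V', [/\ proper_mx V, proper_mx V' & V *m V' = 1%:M].

Lemma biproperM n (V W : 'M[F]_n) : biproper V -> biproper W -> biproper (V *m W).
Proof.
move=> [V' [pV pV' VV']] [W' [pW pW' WW']].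
exists (W' *m V'); split; try exact: proper_mxM.
by rewrite mulmxA -(mulmxA V) WW' mulmx1 VV'.
Qed.

Lemma biproper_perm n (s : 'S_n) : biproper (perm_mx s : 'M[F]_n).
Proof.
have proper_perm_mx (t : 'S_n) : proper_mx (perm_mx t : 'M[F]_n).
  by move=> i j; rewrite !mxE; case: eqP => _; [apply: proper1 | apply: proper0].
by exists (perm_mx s^-1); rewrite -perm_mxM mulgV perm_mx1.
Qed.

Lemma biproper_lower_block n (C : 'M[F]_(n, 1)) : proper_mx C ->
  biproper (block_mx 1%:M 0 C 1%:M : 'M_(1 + n)).
Proof.
move=> pC; exists (block_mx 1%:M 0 (- C) 1%:M).
split; try (apply: proper_block_mx;
  by [apply: proper_mx0 | apply: proper_mx1 | apply: proper_mxN | ]).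
by rewrite mulmx_block !(mulmx1, mul1mx, mulmx0, mul0mx, addr0, add0r) subrr
  -scalar_mx_block.
Qed.

Lemma biproper_upper_block n (R : 'M[F]_(1, n)) : proper_mx R ->
  biproper (block_mx 1%:M R 0 1%:M : 'M_(1 + n)).
Proof.
move=> pR; exists (block_mx 1%:M (- R) 0 1%:M).
split; try (apply: proper_block_mx;
  by [apply: proper_mx0 | apply: proper_mx1 | apply: proper_mxN | ]).
by rewrite mulmx_block !(mulmx1, mul1mx, mulmx0, mul0mx, addr0, add0r) addrC
  subrr -scalar_mx_block.
Qed.

Lemma biproper_diag_block n (V : 'M[F]_n) : biproper V ->
  biproper (block_mx 1%:M 0 0 V : 'M_(1 + n)).
Proof.
move=> [V' [pV pV' VV']]; exists (block_mx 1%:M 0 0 V').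
split; try (apply: proper_block_mx; by [apply: proper_mx0 | apply: proper_mx1 | ]).
by rewrite mulmx_block !(mulmx1, mul1mx, mulmx0, mul0mx, addr0, add0r) VV'
  -scalar_mx_block.
Qed.

(* A nonzero element with the fewest poles at infinity: [b / a] and [a / b]
   cannot both fail to be proper. *)
Lemma has_dominant (s : seq F) : has (predC1 0) s ->
  exists2 a, a \in s & a != 0 /\ {in s, forall b, proper (b / a)}.
Proof.
elim: s => //= b s IH; have [-> /IH[a sa [a0 da]]|b0 _] := eqVneq b 0.
  exists a; first by rewrite inE sa orbT.
  by split=> // c /predU1P[->|/da //]; rewrite mul0r; apply: proper0.
case: (boolP (has (predC1 0) s)) => [/IH[a sa [a0 da]]|/hasPn s0].
  case: (excluded_middle_informative (proper (b / a))) => [pba|npba].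
    by exists a; [rewrite inE sa orbT | split=> // c /predU1P[->|/da]].
  exists b; first exact: mem_head.
  split=> [//|c /predU1P[->|sc]]; first by rewrite (mulfV b0); apply: proper1.
  have -> : c / b = c / a * (a / b) by rewrite mulrA divfK.
  apply: properM (da c sc) (sproper_proper _).
  by rewrite -invf_div; apply: not_proper_inv.
exists b; first exact: mem_head.
split=> // c /predU1P[->|/s0 /negPn /eqP ->]; first by rewrite mulfV //; apply: proper1.
by rewrite mul0r; apply: proper0.
Qed.

Lemma dominant_entry m n (A : 'M[F]_(m, n)) : A != 0 ->
  exists i j, A i j != 0 /\ forall k l, proper (A k l / A i j).
Proof.
move=> A0; pose s := [seq A ij.1 ij.2 | ij <- enum {: 'I_m * 'I_n}].
have /has_dominant[_ /mapP[[i j] _ ->] [Aij0 dA]] : has (predC1 0) s.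
  apply: contraNT A0 => /hasPn s0; apply/eqP/matrixP => i j; rewrite mxE.
  by apply/eqP/negPn/s0/mapP; exists (i, j); rewrite ?mem_enum.
by exists i, j; split=> // k l; apply/dA/mapP; exists (k, l); rewrite ?mem_enum.
Qed.

Lemma dominant_to_corner n (A : 'M[F]_(1 + n)) : A != 0 ->
  exists V W (A1 : 'M[F]_(1 + n)), [/\ biproper V, biproper W,
    A = V *m A1 *m W, A1 0 0 != 0 & forall k l, proper (A1 k l / A1 0 0)].
Proof.
move=> /dominant_entry[i [j [Aij0 dA]]].
pose si := tperm 0 i; pose sj := tperm 0 j.
exists (perm_mx si^-1), (perm_mx sj), (row_perm si (col_perm sj A)).
have -> : row_perm si (col_perm sj A) 0 0 = A i j by rewrite !mxE !tpermL.
split=> //; try exact: biproper_perm.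
- rewrite row_permE col_permE !mulmxA -perm_mxM mulVg perm_mx1 mul1mx.
  by rewrite -mulmxA -perm_mxM mulVg perm_mx1 mulmx1.
- by move=> k l; rewrite !mxE; apply: dA.
Qed.

(* Elimination with a dominant pivot only divides by the pivot, so all the
   multipliers are proper. *)
Lemma pivot_factor n (A : 'M[F]_(1 + n)) : A 0 0 != 0 ->
    (forall k l, proper (A k l / A 0 0)) ->
  exists V W (B : 'M[F]_n),
    [/\ biproper V, biproper W & A = V *m block_mx (A 0 0)%:M 0 0 B *m W].
Proof.
set a := A 0 0 => a0 dA.
pose C := a^-1 *: dlsubmx A; pose R := a^-1 *: ursubmx A.
exists (block_mx 1%:M 0 C 1%:M), (block_mx 1%:M R 0 1%:M).
exists (drsubmx A - dlsubmx A *m R); split.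
- apply: biproper_lower_block => k l; rewrite !mxE mulrC; apply: dA.
- apply: biproper_upper_block => k l; rewrite !mxE mulrC; apply: dA.
rewrite !mulmx_block !(mulmx1, mul1mx, mulmx0, mul0mx, addr0, add0r).
rewrite -{1}[A]submxK; congr block_mx.
- have lshift0 : lshift n (0 : 'I_1) = 0 by apply: val_inj.
  by rewrite [LHS]mx11_scalar !mxE lshift0.
- by rewrite mul_scalar_mx scalerA mulfV // scale1r.
- by rewrite mul_mx_scalar scalerA mulfV // scale1r.
- by rewrite mul_mx_scalar scalerA mulfV // scale1r addrC subrK.
Qed.

Lemma smith_biproper n (A : 'M[F]_n) : A \in unitmx ->
  exists V W (d : 'rV[F]_n), [/\ biproper V, biproper W,
    forall i, d 0 i != 0 & A = V *m diag_mx d *m W].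
Proof.
elim: n A => [|n IH] A uA.
  have eq0 (M N : 'M[F]_0) : M = N by apply/matrixP=> -[].
  have bp1 : biproper (1%:M : 'M[F]_0) by exists 1%:M; split; [case | case | ].
  exists 1%:M, 1%:M, 0; split; [exact: bp1 | exact: bp1 | | exact: eq0].
  by move=> i; exfalso; have := ltn_ord i; rewrite ltn0.
have A0 : A != 0 by apply: contraTneq uA => ->; rewrite unitmxE det0 unitr0.
have [V0 [W0 [A1 [bV0 bW0 AE a0 dA1]]]] := dominant_to_corner A0.
have [V1 [W1 [B [bV1 bW1 A1E]]]] := pivot_factor a0 dA1.
have uB : B \in unitmx.
  move: uA; rewrite AE A1E !unitmx_mul => /andP[/andP[_ /andP[/andP[_ +] _]] _].
  by rewrite !unitmxE (det_ublock (_%:M : 'M_1)) det_scalar1 unitrM => /andP[].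
have [V2 [W2 [d [bV2 bW2 d0 BE]]]] := IH B uB.
exists (V0 *m V1 *m block_mx 1%:M 0 0 V2), (block_mx 1%:M 0 0 W2 *m W1 *m W0).
exists (row_mx (A1 0 0)%:M d); split.
- exact: biproperM (biproperM bV0 bV1) (biproper_diag_block bV2).
- exact: biproperM (biproperM (biproper_diag_block bW2) bW1) bW0.
- move=> i; rewrite mxE; case: splitP => j _; last exact: d0.
  by rewrite ord1 mxE eqxx mulr1n.
have -> : diag_mx (row_mx (A1 0 0)%:M d) = block_mx (A1 0 0)%:M 0 0 (diag_mx d).
  by rewrite diag_mx_row; congr block_mx; apply/matrixP=> i j; rewrite !ord1 !mxE.
have blockE : block_mx (A1 0 0)%:M 0 0 B = block_mx 1%:M 0 0 V2 *m
    block_mx (A1 0 0)%:M 0 0 (diag_mx d) *m block_mx 1%:M 0 0 W2 :> 'M_(1 + n).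
  by rewrite BE !mulmx_block !(mulmx1, mul1mx, mulmx0, mul0mx, addr0, add0r).
by rewrite AE {1}A1E blockE !mulmxA.
Qed.

End SmithAtInfinity.

Section KernelInclusion.
Variable K : fieldType.
Local Notation F := (ratf K).
Local Notation s := (polyF 'X : F).

Lemma ker_rho_sub_from_factor n n1 (L : 'M[{poly K}]_n) (L1 : 'M[{poly K}]_n1)
    (Theta Theta1 Psi : 'M[F]_(n1, n)) :
  \det L != 0 -> \det L1 != 0 -> proper_mx Theta -> proper_mx Theta1 -> sproper_mx Psi ->
  (Theta + polymx L1 *m Psi) *m polymx L = polymx L1 *m Theta1 ->
  forall x, in_ker_rho L x -> in_ker_rho L1 (Theta *m x).
Proof.
move=> detL detL1 pTheta pTheta1 sPsi E x /(in_ker_rhoP _ detL)[px sx].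
have uL := polymx_unit detL; have uL1 := polymx_unit detL1.
apply/(in_ker_rhoP _ detL1); split; first exact: proper_mxM.
have -> : invmx (polymx L1) *m (Theta *m x)
    = Theta1 *m (invmx (polymx L) *m x) - Psi *m x.
  rewrite mulmxA -[Theta1](mulKmx uL1) -E mulmxDl mulmxDr !mulmxA mulVmx //.
  by rewrite mul1mx mulmxDl !(mulmxK uL) mulmxDl addrK.
by apply: sproper_mxD; [apply: sproper_mxMl | apply/sproper_mxN/sproper_mxMr].
Qed.

(* The inclusion is tested on the columns [c e_i] of a Smith factor: [c] must be proper
   with [c / d] strictly proper, and the two extreme choices of [c] are [d / s] and [1]. *)
Lemma column_test (p d : F) : d != 0 ->
    (forall c, proper c -> sproper (c / d) -> sproper (p * c)) ->
  (proper d -> proper (p * d)) /\ (~ proper d -> sproper p).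
Proof.
move=> d0 Hp; split=> [pd | npd].
  have /sproperE : sproper (p * (d / s)).
    apply: Hp; first exact: properM pd (proper_invs K).
    by rewrite mulrAC mulfV // mul1r; apply: sproper_invs.
  by rewrite mulrCA (mulrCA s) mulfV ?s_neq0 // mulr1.
rewrite -[p]mulr1; apply: Hp; first exact: proper1.
by rewrite mul1r; apply: not_proper_inv.
Qed.

Definition pole_mask n (d : 'rV[F]_n) : 'rV[F]_n :=
  \row_i (if excluded_middle_informative (proper (d 0 i)) then 0 else 1).

Lemma pole_maskP n (d : 'rV[F]_n) i :
  (proper (d 0 i) /\ pole_mask d 0 i = 0) \/ (~ proper (d 0 i) /\ pole_mask d 0 i = 1).
Proof. by rewrite mxE; case: excluded_middle_informative; [left | right]. Qed.

Lemma proper_pole_mask n (d : 'rV[F]_n) : proper_mx (diag_mx (pole_mask d)).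
Proof.
apply: proper_diag_mx => i.
by case: (pole_maskP d i) => -[_ ->]; [apply: proper0 | apply: proper1].
Qed.

Lemma ker_rho_smith_columns n n1 (L : 'M[{poly K}]_n) (L1 : 'M[{poly K}]_n1)
    (Theta : 'M[F]_(n1, n)) (V W W' : 'M[F]_n) (d : 'rV[F]_n) :
  \det L != 0 -> \det L1 != 0 -> proper_mx V -> proper_mx W' -> W *m W' = 1%:M ->
  (forall i, d 0 i != 0) -> polymx L = V *m diag_mx d *m W ->
  (forall x, in_ker_rho L x -> in_ker_rho L1 (Theta *m x)) ->
  forall k i c, proper c -> sproper (c / d 0 i) ->
    sproper ((invmx (polymx L1) *m Theta *m V) k i * c).
Proof.
move=> detL detL1 pV pW' WW' d0 LE H k i c pc scd.
pose e : 'cV[F]_n := delta_mx i 0.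
have De : diag_mx d *m e = d 0 i *: e.
  by apply/matrixP=> j l; rewrite mul_diag_mx !mxE; case: eqVneq => [->|_]; rewrite ?mulr0.
pose y := W' *m ((c / d 0 i) *: e).
have Ly : polymx L *m y = V *m (c *: e).
  rewrite LE /y -!mulmxA (mulmxA W) WW' mul1mx; congr (V *m _).
  by rewrite -scalemxAr De scalerA divfK.
have kx : in_ker_rho L (V *m (c *: e)).
  apply/(in_ker_rhoP _ detL); split.
    exact/proper_mxM/proper_mxZ/proper_delta_mx.
  rewrite -Ly mulKmx ?polymx_unit //.
  exact/sproper_mxMl/sproper_mxZ/proper_delta_mx.
have /(in_ker_rhoP _ detL1)[_ /(_ k 0)] := H _ kx.
by rewrite !mulmxA -scalemxAr -colE !mxE mulrC.
Qed.

Lemma factor_from_ker_rho_sub n n1 (L : 'M[{poly K}]_n) (L1 : 'M[{poly K}]_n1)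
    (Theta : 'M[F]_(n1, n)) :
  \det L != 0 -> \det L1 != 0 -> proper_mx Theta ->
  (forall x, in_ker_rho L x -> in_ker_rho L1 (Theta *m x)) ->
  exists Theta1, proper_mx Theta1 /\ exists Psi, [/\ sproper_mx Psi,
    proper_mx (polymx L1 *m Psi) &
    (Theta + polymx L1 *m Psi) *m polymx L = polymx L1 *m Theta1].
Proof.
move=> detL detL1 pTheta H; have uL1 := polymx_unit detL1.
have [V [W [d [[V' [pV pV' VV']] [W' [pW pW' WW']] d0 LE]]]] :=
  smith_biproper (polymx_unit detL).
move: (pole_mask d) (pole_maskP d) (proper_pole_mask d) => g gP pG.
have colP k i := column_test (d0 i)
  (ker_rho_smith_columns detL detL1 pV pW' WW' d0 LE H k (i := i)).
set P := invmx (polymx L1) *m Theta *m V in colP.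
have L1P : polymx L1 *m P = Theta *m V by rewrite /P -mulmxA mulKVmx.
clearbody P; pose G := diag_mx g.
exists ((P - P *m G) *m diag_mx d *m W); split.
  apply: proper_mxM pW; rewrite !mul_mx_diag => k i; rewrite !mxE.
  have [[pd ->] | [_ ->]] := gP i; last first.
    by rewrite mulr1 subrr mul0r; apply: proper0.
  by rewrite mulr0 subr0; apply: (colP k i).1.
exists (- (P *m G) *m V'); split.
- apply: sproper_mxMr pV'; apply: sproper_mxN => k i; rewrite mul_mx_diag mxE.
  have [[_ ->] | [npd ->]] := gP i; first by rewrite mulr0; apply: sproper0.
  by rewrite mulr1; apply: (colP k i).2.
- rewrite mulmxA mulmxN mulmxA L1P; apply/proper_mxM/pV'/proper_mxN.
  exact/proper_mxM/pG/proper_mxM.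
have V'V := mulmx1C VV'.
rewrite mulNmx mulmxN !mulmxA L1P mulmxBr mulmxBl mulmxDl mulNmx LE !mulmxA L1P.
by rewrite -[_ *m V' *m V]mulmxA V'V mulmx1 mulmxBl.
Qed.

End KernelInclusion.

Unset Implicit Arguments.

Theorem lemma3p2 (K : fieldType) (n n1 : nat)
  (L : 'M[{poly K}]_n) (L1 : 'M[{poly K}]_n1)
  (HL : \det L != 0) (HL1 : \det L1 != 0)
  (Theta : 'M[ratf K]_(n1, n)) (HTheta : proper_mx Theta) :
  (forall x : 'cV[ratf K]_n, in_ker_rho L x -> in_ker_rho L1 (Theta *m x))
  <->
  (exists Theta1 : 'M[ratf K]_(n1, n),
     proper_mx Theta1 /\
     exists Psi : 'M[ratf K]_(n1, n),
       sproper_mx Psi /\ proper_mx (polymx L1 *m Psi) /\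
       (Theta + polymx L1 *m Psi) *m polymx L = polymx L1 *m Theta1).
Proof.
split=> [sub | [Theta1 [pTheta1 [Psi [sPsi [_ E]]]]]].
  have [Theta1 [pTheta1 [Psi [sPsi pL1Psi E]]]] := factor_from_ker_rho_sub HL HL1 HTheta sub.
  by exists Theta1; split=> //; exists Psi.
exact: ker_rho_sub_from_factor HL HL1 HTheta pTheta1 sPsi E.
Qed.
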